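(* Let $\mathbb S=\{(X_1,X_2,A)\in\mathbb C^2\times\mathbb R: -2\,\mathrm{Re}(X_1+X_2)-2\,\mathrm{Re}(X_1\overline{X}_2e^{-2iA})+|X_1|^2+|X_2|^2+1=0\}$ and $\mathbb S_{124}=\{(X_1,X_2,A)\in\mathbb C^2\times\mathbb R:\mathrm{Re}(\overline{X}_1e^{iA})=0\}$. Writing $X_1=a+bi$, $X_2=c+di$, the intersection $\mathbb S\cap\mathbb S_{124}$ is not transversal; it is a union of $2$-dimensional real analytic varieties, given by the equations $a+b\tan A=0$, $a+c=1$, $b-d=0$ where $A\ne\pm\pi/2+2k\pi$, and by $a+c=1$, $b=0$, $d=0$ where $A=\pm\pi/2+2k\pi$ ($k\in\mathbb Z$). *)

From Stdlib Require Import Reals ZArith.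
From Coquelicot Require Import Coquelicot.
Open Scope R_scope.

Definition expi (A : R) : C := (cos A, sin A).

Definition Sfun (X1 X2 : C) (A : R) : R :=
  - 2 * Re (Cplus X1 X2)
  - 2 * Re (Cmult (Cmult X1 (Cconj X2)) (expi (- 2 * A)))
  + (Cmod X1) ^ 2 + (Cmod X2) ^ 2 + 1.

Definition S124fun (X1 X2 : C) (A : R) : R :=
  Re (Cmult (Cconj X1) (expi A)).

Definition inS (X1 X2 : C) (A : R) : Prop := Sfun X1 X2 A = 0.
Definition inS124 (X1 X2 : C) (A : R) : Prop := S124fun X1 X2 A = 0.

Definition realify (f : C -> C -> R -> R) (a b c d A : R) : R :=
  f (a, b) (c, d) A.

Definition grad (f : C -> C -> R -> R) (X1 X2 : C) (A : R) : R * R * R * R * R :=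
  let a := fst X1 in let b := snd X1 in let c := fst X2 in let d := snd X2 in
  let g := realify f in
  (Derive (fun x => g x b c d A) a,
   Derive (fun x => g a x c d A) b,
   Derive (fun x => g a b x d A) c,
   Derive (fun x => g a b c x A) d,
   Derive (fun x => g a b c d x) A).

Definition lin_indep5 (u v : R * R * R * R * R) : Prop :=
  let '(u1, u2, u3, u4, u5) := u in
  let '(v1, v2, v3, v4, v5) := v in
  forall l m : R,
    l * u1 + m * v1 = 0 -> l * u2 + m * v2 = 0 -> l * u3 + m * v3 = 0 ->
    l * u4 + m * v4 = 0 -> l * u5 + m * v5 = 0 -> l = 0 /\ m = 0.

Definition transversal_at (X1 X2 : C) (A : R) : Prop :=
  lin_indep5 (grad Sfun X1 X2 A) (grad S124fun X1 X2 A).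

From Stdlib Require Import Reals ZArith Lra Psatz.
From Coquelicot Require Import Coquelicot.
Open Scope R_scope.

(* In the coordinates (a, b, c, d, A) the defining function of S is
   (a + c - 1)^2 + (b - d)^2 - 4 (c cos A - d sin A) P, where
   P = a cos A + b sin A defines S_124.  So on S_124 the set S is cut out by
   a + c = 1 and b = d; at such points both squares vanish to second order,
   hence grad S = -4 (c cos A - d sin A) grad P and transversality fails
   everywhere.  The two families of components come from solving P = 0
   according to whether cos A vanishes. *)

Lemma S124fun_coord a b c d A :
  realify S124fun a b c d A = a * cos A + b * sin A.
Proof. unfold realify, S124fun, Re, Cmult, Cconj, expi; simpl; ring. Qed.

Lemma Sfun_coord a b c d A :
  realify Sfun a b c d A =
  (a + c - 1) ^ 2 + (b - d) ^ 2
  - 4 * (c * cos A - d * sin A) * (a * cos A + b * sin A).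
Proof.
  unfold realify, Sfun, Re, Cplus, Cmult, Cconj, Cmod, expi; cbn [fst snd].
  rewrite !pow2_sqrt by nra.
  replace (- 2 * A) with (- (2 * A)) by ring.
  rewrite cos_neg, sin_neg, cos_2a, sin_2a.
  assert (Hsc := sin2_cos2 A); unfold Rsqr in Hsc.
  transitivity ((a + c - 1) ^ 2 + (b - d) ^ 2
    - 4 * (c * cos A - d * sin A) * (a * cos A + b * sin A)
    - 2 * (b * d - a * c) * (sin A * sin A + cos A * cos A - 1)); [ring |].
  rewrite Hsc; ring.
Qed.

Lemma grad_S124fun a b c d A :
  grad S124fun (a, b) (c, d) A =
  (cos A, sin A, 0, 0, b * cos A - a * sin A).
Proof.
  unfold grad; simpl.
  rewrite (Derive_ext (fun x => realify S124fun x b c d A) (fun x => x * cos A + b * sin A))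
    by (intros; apply S124fun_coord).
  rewrite (Derive_ext (fun x => realify S124fun a x c d A) (fun x => a * cos A + x * sin A))
    by (intros; apply S124fun_coord).
  rewrite (Derive_ext (fun x => realify S124fun a b x d A) (fun _ => a * cos A + b * sin A))
    by (intros; apply S124fun_coord).
  rewrite (Derive_ext (fun x => realify S124fun a b c x A) (fun _ => a * cos A + b * sin A))
    by (intros; apply S124fun_coord).
  rewrite (Derive_ext (fun x => realify S124fun a b c d x) (fun x => a * cos x + b * sin x))
    by (intros; apply S124fun_coord).
  rewrite !Derive_const.
  repeat f_equal; apply is_derive_unique; auto_derive; auto; ring.
Qed.

Lemma grad_Sfun a b c d A :
  let L := c * cos A - d * sin A in
  let P := a * cos A + b * sin A in
  grad Sfun (a, b) (c, d) A =
  (2 * (a + c - 1) - 4 * L * cos A,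
   2 * (b - d) - 4 * L * sin A,
   2 * (a + c - 1) - 4 * cos A * P,
   - 2 * (b - d) + 4 * sin A * P,
   4 * (c * sin A + d * cos A) * P - 4 * L * (b * cos A - a * sin A)).
Proof.
  intros L P; unfold grad; simpl.
  rewrite (Derive_ext (fun x => realify Sfun x b c d A)
    (fun x => (x + c - 1) ^ 2 + (b - d) ^ 2
              - 4 * (c * cos A - d * sin A) * (x * cos A + b * sin A)))
    by (intros; apply Sfun_coord).
  rewrite (Derive_ext (fun x => realify Sfun a x c d A)
    (fun x => (a + c - 1) ^ 2 + (x - d) ^ 2
              - 4 * (c * cos A - d * sin A) * (a * cos A + x * sin A)))
    by (intros; apply Sfun_coord).
  rewrite (Derive_ext (fun x => realify Sfun a b x d A)
    (fun x => (a + x - 1) ^ 2 + (b - d) ^ 2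
              - 4 * (x * cos A - d * sin A) * (a * cos A + b * sin A)))
    by (intros; apply Sfun_coord).
  rewrite (Derive_ext (fun x => realify Sfun a b c x A)
    (fun x => (a + c - 1) ^ 2 + (b - x) ^ 2
              - 4 * (c * cos A - x * sin A) * (a * cos A + b * sin A)))
    by (intros; apply Sfun_coord).
  rewrite (Derive_ext (fun x => realify Sfun a b c d x)
    (fun x => (a + c - 1) ^ 2 + (b - d) ^ 2
              - 4 * (c * cos x - d * sin x) * (a * cos x + b * sin x)))
    by (intros; apply Sfun_coord).
  unfold L, P; repeat f_equal; apply is_derive_unique; auto_derive; auto; ring.
Qed.

Lemma not_lin_indep5_scal k v1 v2 v3 v4 v5 :
  ~ lin_indep5 (k * v1, k * v2, k * v3, k * v4, k * v5) (v1, v2, v3, v4, v5).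
Proof.
  intros H; destruct (H 1 (- k)) as [H1 _]; try ring; lra.
Qed.

Lemma in_S_S124_iff a b c d A :
  inS (a, b) (c, d) A /\ inS124 (a, b) (c, d) A <->
  a + c = 1 /\ b = d /\ a * cos A + b * sin A = 0.
Proof.
  unfold inS, inS124.
  change (Sfun (a, b) (c, d) A) with (realify Sfun a b c d A).
  change (S124fun (a, b) (c, d) A) with (realify S124fun a b c d A).
  rewrite Sfun_coord, S124fun_coord.
  split.
  - intros [HS HP]; rewrite HP in HS.
    assert (Hsq : Rsqr (a + c - 1) + Rsqr (b - d) = 0)
      by (rewrite !Rsqr_pow2; lra).
    apply Rplus_sqr_eq_0 in Hsq; lra.
  - intros [Hac [Hbd HP]]; rewrite HP; split; [| reflexivity].
    replace (a + c - 1) with 0 by lra; replace (b - d) with 0 by lra; ring.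
Qed.

Lemma not_transversal_at_intersection X1 X2 A :
  inS X1 X2 A -> inS124 X1 X2 A -> ~ transversal_at X1 X2 A.
Proof.
  destruct X1 as [a b], X2 as [c d]; intros HS HP.
  destruct (proj1 (in_S_S124_iff a b c d A) (conj HS HP)) as [Hac [Hbd HPA]].
  unfold transversal_at; rewrite grad_Sfun, grad_S124fun; cbv zeta.
  rewrite HPA.
  replace (a + c - 1) with 0 by lra; replace (b - d) with 0 by lra.
  set (k := - 4 * (c * cos A - d * sin A)).
  replace (2 * 0 - 4 * (c * cos A - d * sin A) * cos A) with (k * cos A) by (unfold k; ring).
  replace (2 * 0 - 4 * (c * cos A - d * sin A) * sin A) with (k * sin A) by (unfold k; ring).
  replace (2 * 0 - 4 * cos A * 0) with (k * 0) by ring.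
  replace (- 2 * 0 + 4 * sin A * 0) with (k * 0) by ring.
  replace (4 * (c * sin A + d * cos A) * 0 - 4 * (c * cos A - d * sin A) * (b * cos A - a * sin A))
    with (k * (b * cos A - a * sin A)) by (unfold k; ring).
  apply not_lin_indep5_scal.
Qed.

Lemma cos_eq_0_iff A :
  cos A = 0 <->
  exists k : Z, A = PI / 2 + 2 * IZR k * PI \/ A = - (PI / 2) + 2 * IZR k * PI.
Proof.
  split.
  - intros H; destruct (cos_eq_0_0 A H) as [k Hk].
    destruct (Zeven_odd_dec k) as [He | Ho].
    + destruct (Zeven_ex k He) as [m Hm]; exists m; left.
      rewrite Hk, Hm, mult_IZR; field.
    + destruct (Zodd_ex k Ho) as [m Hm]; exists (m + 1)%Z; right.
      rewrite Hk, Hm, plus_IZR, mult_IZR, plus_IZR; field.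
  - intros [k [Hk | Hk]]; apply cos_eq_0_1.
    + exists (2 * k)%Z; rewrite Hk, mult_IZR; field.
    + exists (2 * k - 1)%Z; rewrite Hk, minus_IZR, mult_IZR; field.
Qed.

Lemma cos_sin_comb_eq_0_tan a b A :
  cos A <> 0 -> a * cos A + b * sin A = 0 <-> a + b * tan A = 0.
Proof.
  intros Hc.
  replace (a * cos A + b * sin A) with ((a + b * tan A) * cos A)
    by (unfold tan; field; exact Hc).
  split; intros H.
  - destruct (Rmult_integral _ _ H); [assumption | contradiction].
  - rewrite H; ring.
Qed.

Lemma cos_sin_comb_eq_0_cos_0 a b A :
  cos A = 0 -> a * cos A + b * sin A = 0 <-> b = 0.
Proof.
  intros Hc.
  assert (Hs : sin A * sin A = 1)
    by (pose proof (sin2_cos2 A) as H; unfold Rsqr in H; rewrite Hc in H; lra).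
  rewrite Hc; split; intros H.
  - assert (Hbs : b * sin A = 0) by lra.
    transitivity (b * sin A * sin A); [rewrite Rmult_assoc, Hs; ring |].
    rewrite Hbs; ring.
  - rewrite H; ring.
Qed.

Theorem proposition3p7 :
  (* the intersection S ∩ S_124 is not transversal *)
  ~ (forall (X1 X2 : C) (A : R),
       inS X1 X2 A -> inS124 X1 X2 A -> transversal_at X1 X2 A) /\
  (* explicit description of S ∩ S_124, with X1 = a + b i, X2 = c + d i *)
  (forall (a b c d A : R),
     (inS (a, b) (c, d) A /\ inS124 (a, b) (c, d) A) <->
     (((forall k : Z, A <> PI / 2 + 2 * IZR k * PI /\ A <> - (PI / 2) + 2 * IZR k * PI) /\
       a + b * tan A = 0 /\ a + c = 1 /\ b - d = 0)
      \/
      ((exists k : Z, A = PI / 2 + 2 * IZR k * PI \/ A = - (PI / 2) + 2 * IZR k * PI) /\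
       a + c = 1 /\ b = 0 /\ d = 0))).
Proof.
  split.
  - intros Htrans.
    assert (Hpt : inS (0, 0) (1, 0) 0 /\ inS124 (0, 0) (1, 0) 0)
      by (apply in_S_S124_iff; repeat split; ring).
    destruct Hpt as [HS HP].
    exact (not_transversal_at_intersection _ _ _ HS HP (Htrans _ _ _ HS HP)).
  - intros a b c d A; rewrite in_S_S124_iff.
    destruct (Req_dec (cos A) 0) as [Hc | Hc].
    + rewrite (cos_sin_comb_eq_0_cos_0 a b A Hc).
      pose proof (proj1 (cos_eq_0_iff A) Hc) as Hk.
      split.
      * intros [Hac [Hbd Hb]]; right; repeat split; auto; lra.
      * intros [[Hnk _] | [_ [Hac [Hb Hd]]]]; [| repeat split; lra].
        destruct Hk as [k [Hk | Hk]]; destruct (Hnk k); contradiction.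
    + rewrite (cos_sin_comb_eq_0_tan a b A Hc).
      split.
      * intros [Hac [Hbd Ht]]; left; split; [| repeat split; lra].
        intros k; split; intros E; apply Hc, cos_eq_0_iff; exists k; auto.
      * intros [[_ [Ht [Hac Hbd]]] | [Hk _]]; [repeat split; lra |].
        exfalso; apply Hc, cos_eq_0_iff, Hk.
Qed.
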